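(* Let $X$ be a finite quandle, $\Lambda$ a finite abelian group, $\phi:X\times X\to\Lambda$ a quandle $2$-cocycle with $Q=\Lambda\times_\phi X$ connected, and $\pi:Q\to X$, $(\lambda,a)\mapsto a$. Let $K$ be an oriented knot, $T$ a $1$-tangle diagram with closure $K$, top arc $b_0$, bottom arc $b_1$, and write $\Phi_\phi(K)=\sum_{\lambda\in\Lambda}n_\lambda\lambda$. Fix $x\in X$, let $e=(1,x)$, let $\mathscr{C}_0$ be the set of colorings $C$ of $T$ by $Q$ with $C(b_0)=e$ and $\pi C(b_1)=x$, and let $\mathscr{C}_1=\mathrm{Col}^e_Q(T)\setminus\mathscr{C}_0$. Then $$\Psi^e_Q(K)=\frac{1}{|X|}\sum_{\lambda\in\Lambda} n_\lambda\,(\lambda,x)+\sum_{C\in\mathscr{C}_1}C(b_1).$$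
   Context: A quandle is a set with operation $*$ satisfying $a*a=a$; unique right division; $(a*b)*c=(a*c)*(b*c)$. $R_a(y)=y*a$; connected means the group generated by the $R_a$ acts transitively. A quandle $2$-cocycle is $\phi:X\times X\to\Lambda$ ($\Lambda$ abelian, multiplicative) with $\phi(a,a)=1$ and $\phi(a,b)\phi(a*b,c)=\phi(a,c)\phi(a*c,b*c)$; $\Lambda\times_\phi X$ is $\Lambda\times X$ with $(\lambda,a)*(\mu,b)=(\lambda\phi(a,b),a*b)$. Colorings: arcs of an oriented diagram get colors so that at each crossing $\tau$ with source colors $(x_\tau,y_\tau)$ (incoming under-arc, over-arc) the outgoing under-arc gets $x_\tau*y_\tau$; $\epsilon(\tau)$ is the crossing sign; $B_\phi(K,C)=\prod_\tau\phi(x_\tau,y_\tau)^{\epsilon(\tau)}$ and $\Phi_\phi(K)=\sum_C B_\phi(K,C)\in\mathbb{Z}[\Lambda]$ over all colorings of $K$ by $X$. A $1$-tangle is a properly embedded oriented arc in a 3-ball up to isotopy rel boundary, oriented top to bottom, with closure obtained by joining endpoints with a trivial arc; end colors need not agree. $\mathrm{Col}^e_Q(T)$ is the set of colorings $C$ of $T$ by $Q$ with $C(b_0)=e$, and $\Psi^e_Q(K)=\sum_{C\in\mathrm{Col}^e_Q(T)}C(b_1)$, a formal $\mathbb{Z}$-linear combination of elements of $Q$. *)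

From HB Require Import structures.
From mathcomp Require Import all_boot all_order all_algebra all_fingroup.
Set Implicit Arguments.
Unset Strict Implicit.
Unset Printing Implicit Defensive.
Import GRing.Theory Num.Theory.

Definition is_quandle (X : finType) (op : X -> X -> X) : Prop :=
  [/\ forall a, op a a = a,
      forall b, bijective (fun y => op y b)
    & forall a b c, op (op a b) c = op (op a c) (op b c)].

Definition quandle_cocycle (X : finType) (op : X -> X -> X)
    (L : finGroupType) (phi : X -> X -> L) : Prop :=
  (forall a, phi a a = 1%g) /\
  (forall a b c,
     (phi a b * phi (op a b) c = phi a c * phi (op a c) (op b c))%g).

Definition ext_op (X : finType) (op : X -> X -> X) (L : finGroupType)
    (phi : X -> X -> L) : (L * X)%type -> (L * X)%type -> (L * X)%type :=
  fun p q => ((p.1 * phi p.2 q.2)%g, op p.2 q.2).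

(* Connected: the group generated by the right translations R_a acts
   transitively, i.e. any two elements are related by a finite chain of
   applications of the R_a and their inverses. *)
Definition connected_quandle (Y : finType) (op : Y -> Y -> Y) : Prop :=
  forall y z : Y,
    connect [rel u v | [exists a, (v == op u a) || (u == op v a)]] y z.

(* Walking along the oriented strand
   from the top end to the bottom end, the strand passes 2n times through a
   crossing; these passages are numbered 0, ..., 2n-1 in order.  Crossing c
   is passed under at passage [gd_under c] and over at passage [gd_over c];
   [gd_sign c] is true iff the crossing is positive.
   The strand is cut by the passages into 2n+1 segments 0, ..., 2n:
   segment k enters passage k and segment k+1 leaves it.  Segment 0 lies on
   the top arc b_0, segment 2n on the bottom arc b_1. *)
Record gauss_diagram (n : nat) := GaussDiagram {
  gd_under : 'I_n -> 'I_(2 * n);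
  gd_over  : 'I_n -> 'I_(2 * n);
  gd_sign  : 'I_n -> bool }.

Definition gd_pass n (D : gauss_diagram n) (s : ('I_n + 'I_n)%type)
  : 'I_(2 * n) :=
  match s with inl c => gd_under D c | inr c => gd_over D c end.

Definition crossing_of n (D : gauss_diagram n) (p : 'I_(2 * n))
  : option 'I_n := [pick c | (gd_under D c == p) || (gd_over D c == p)].

(* Darts of the 4-valent graph of the closure K: (p, false) is the incoming
   half-edge at passage p, (p, true) the outgoing one. *)
Definition dart n := ('I_(2 * n) * bool)%type.

(* The edge involution (passages are cyclically joined in the closure). *)
Definition dart_alpha n (d : dart n) : dart n :=
  if d.2 then (ordS d.1, false) else (ord_pred d.1, true).

(* Counterclockwise rotation at a crossing, with under-passage u and
   over-passage o.  Positive crossing: in_u -> out_o -> out_u -> in_o;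
   negative crossing: in_u -> in_o -> out_u -> out_o. *)
Definition dart_sigma n (D : gauss_diagram n) (d : dart n) : dart n :=
  match crossing_of D d.1 with
  | Some c =>
      let u := gd_under D c in let o := gd_over D c in let s := gd_sign D c in
      if d.1 == u then (o, s (+) d.2) else (u, d.2 (+) ~~ s)
  | None => d
  end.

Definition face_step n (D : gauss_diagram n) (d : dart n) : dart n :=
  dart_sigma D (dart_alpha d).

(* Planarity of the closure (a 4-valent map with n vertices, 2n edges,
   connected): Euler characteristic 2, i.e. n+2 faces; the crossingless
   diagram is planar. *)
Definition planar_diagram n (D : gauss_diagram n) : Prop :=
  n = 0%N \/ fcard (face_step D) (@predT (dart n)) = (n + 2)%N.

(* A genuine (classical) 1-tangle diagram: each passage belongs to exactly
   one crossing, as the under- or as the over-passage, and the rotation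
   system is spherical. *)
Definition valid_diagram n (D : gauss_diagram n) : Prop :=
  injective (gd_pass D) /\ planar_diagram D.

Definition segcol n (Y : Type) := {ffun 'I_(2 * n).+1 -> Y}.

(* Coloring condition: colors are constant along arcs (through over-passages)
   and at crossing c with source colors (x_c, y_c) the other under-segment
   gets x_c * y_c.  The under-segment in the source region is the incoming
   one at a positive and the outgoing one at a negative crossing. *)
Definition is_coloring (Y : finType) (op : Y -> Y -> Y) n
    (D : gauss_diagram n) (C : segcol n Y) : bool :=
  [forall c : 'I_n,
     let u : nat := gd_under D c in let o : nat := gd_over D c in
     (C (inord o) == C (inord o.+1)) &&
     (if gd_sign D c then C (inord u.+1) == op (C (inord u)) (C (inord o))
      else C (inord u) == op (C (inord u.+1)) (C (inord o)))].

Definition tangle_colorings (Y : finType) (op : Y -> Y -> Y) n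
    (D : gauss_diagram n) : {set segcol n Y} :=
  [set C | is_coloring op D C].

Definition top_col n (Y : Type) (C : segcol n Y) : Y := C ord0.
Definition bot_col n (Y : Type) (C : segcol n Y) : Y := C ord_max.

(* Colorings of the closure K: the closing arc has no crossings, so these are
   the tangle colorings whose two end colors agree. *)
Definition knot_colorings (Y : finType) (op : Y -> Y -> Y) n
    (D : gauss_diagram n) : {set segcol n Y} :=
  [set C in tangle_colorings op D | top_col C == bot_col C].

Definition weight (X : finType) (L : finGroupType) (phi : X -> X -> L) n
    (D : gauss_diagram n) (C : segcol n X) : L :=
  (\prod_(c < n)
     (let u : nat := gd_under D c in let o : nat := gd_over D c in
      if gd_sign D c then phi (C (inord u)) (C (inord o))
      else (phi (C (inord u.+1)) (C (inord o)))^-1))%g.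

(* Formal Z-linear combination sum_{i in A} f(i) of elements of Y,
   as its coefficient function. *)
Definition fsum (I Y : finType) (A : {set I}) (f : I -> Y) : {ffun Y -> int} :=
  [ffun y => Posz #|[set i in A | f i == y]|].

(* Phi_phi(K) = sum_C B_phi(K,C) in Z[L]; its coefficient at l is n_l. *)
Definition cocycle_invariant (X : finType) (op : X -> X -> X)
    (L : finGroupType) (phi : X -> X -> L) n (D : gauss_diagram n)
  : {ffun L -> int} :=
  fsum (knot_colorings op D) (weight phi D).

Definition col_e (Y : finType) (op : Y -> Y -> Y) n (D : gauss_diagram n)
    (e : Y) : {set segcol n Y} :=
  [set C in tangle_colorings op D | top_col C == e].

Definition Psi (Y : finType) (op : Y -> Y -> Y) n (D : gauss_diagram n)
    (e : Y) : {ffun Y -> int} :=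
  fsum (col_e op D e) (@bot_col n Y).

From HB Require Import structures.
From mathcomp Require Import all_boot all_order all_algebra all_fingroup.
Import GRing.Theory Num.Theory.
Set Implicit Arguments.
Unset Strict Implicit.

(** Walking down the strand of a [Q]-coloring with top color [(1, x)], the
    [L]-component is multiplied by [phi(x_c, y_c)^(+-1)] at each under-passage
    and kept at each over-passage, so it ends at the Boltzmann weight of the
    projected [X]-coloring; and a [Q]-coloring is determined by this
    projection and its top color.  Hence the colorings in [C0] ending at
    [(l, x)] correspond to the closed [X]-colorings with top color [x] and
    weight [l].  By the cocycle condition, applying [R_a] to a closed coloring
    changes each crossing weight by a factor which telescopes along the
    strand, so the weight is [R_a]-invariant; by connectivity the number of
    closed colorings of weight [l] and top color [y] does not depend on [y],
    and [n_l] is [#|X|] times it. *)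

(* [mulg] tagged with a commutativity proof, so that it carries a canonical
   [Monoid.com_law] and the commutative big-operator lemmas apply to it. *)
Definition comm_mulg (L : finGroupType) of (forall a b : L, (a * b = b * a)%g) :=
  fun a b : L => (a * b)%g.

HB.instance Definition _ (L : finGroupType) (mulgC : forall a b : L, (a * b = b * a)%g) :=
  Monoid.isComLaw.Build L 1%g (comm_mulg mulgC) (@mulgA L) mulgC (@mul1g L).

Lemma inord_max m : inord m = ord_max :> 'I_m.+1.
Proof. by apply: val_inj; rewrite /= inordK. Qed.

Lemma inord0 m : inord 0 = ord0 :> 'I_m.+1.
Proof. by apply: val_inj; rewrite /= inordK. Qed.

Lemma fsumID (I Y : finType) (A B : {set I}) (f : I -> Y) y :
  fsum A f y = (fsum (A :&: B) f y + fsum (A :\: B) f y)%R.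
Proof.
rewrite !ffunE -PoszD -(cardsID B [set i in A | f i == y]); congr (Posz (_ + _)).
  by apply: eq_card => i; rewrite !inE andbAC.
by apply: eq_card => i; rewrite !inE andbA.
Qed.

Section Passages.

Variables (n : nat) (D : gauss_diagram n).
Hypothesis gd_pass_inj : injective (gd_pass D).

Lemma gd_pass_surj (p : 'I_(2 * n)) : exists s, gd_pass D s = p.
Proof.
have card_le : #|{: 'I_(2 * n)}| <= #|{: ('I_n + 'I_n)%type}|.
  by rewrite card_sum !card_ord addnn mul2n.
by have /codomP[s ->] := inj_card_onto gd_pass_inj card_le p; exists s.
Qed.

Lemma gd_under_inj : injective (gd_under D).
Proof. by move=> c c' eq_u; have [] := gd_pass_inj (x1 := inl c) (x2 := inl c') eq_u. Qed.

Lemma gd_under_neq_over c c' : gd_under D c <> gd_over D c'.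
Proof. by move=> eq_uo; have := gd_pass_inj (x1 := inl c) (x2 := inr c') eq_uo. Qed.

Variables (R : Type) (idx : R) (op : Monoid.com_law idx).

Definition under_prod (F : 'I_n -> R) (p : nat) : R :=
  \big[op/idx]_(c | gd_under D c == p :> nat) F c.

Lemma big_under_prod F :
  \big[op/idx]_(c < n) F c = \big[op/idx]_(p < 2 * n) under_prod F p.
Proof. by rewrite (partition_big (gd_under D) predT). Qed.

Lemma under_prod_under F c : under_prod F (gd_under D c) = F c.
Proof.
rewrite /under_prod (big_pred1 c) // => c'.
by apply/eqP/eqP => [/val_inj/gd_under_inj | ->].
Qed.

Lemma under_prod_over F c : under_prod F (gd_over D c) = idx.
Proof.
by rewrite /under_prod big_pred0 // => c'; apply/eqP => /val_inj /gd_under_neq_over.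
Qed.

End Passages.

Section Weights.

Variables (X : finType) (L : finGroupType) (phi : X -> X -> L).
Hypothesis mulgC : forall a b : L, (a * b = b * a)%g.
Variables (n : nat) (D : gauss_diagram n).

Local Notation mulL := (comm_mulg mulgC).

Definition crossing_weight (C : segcol n X) (c : 'I_n) : L :=
  let u : nat := gd_under D c in let o : nat := gd_over D c in
  if gd_sign D c then phi (C (inord u)) (C (inord o))
  else (phi (C (inord u.+1)) (C (inord o)))^-1%g.

Lemma weightE C : weight phi D C = \big[mulL/1%g]_(c < n) crossing_weight C c.
Proof. by []. Qed.

Definition partial_weight C i : L :=
  \big[mulL/1%g]_(0 <= p < i) under_prod D mulL (crossing_weight C) p.

Lemma partial_weight0 C : partial_weight C 0 = 1%g.
Proof. by rewrite /partial_weight big_geq. Qed.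

Lemma partial_weightS C i :
  partial_weight C i.+1 = (partial_weight C i * under_prod D mulL (crossing_weight C) i)%g.
Proof. by rewrite /partial_weight big_nat_recr. Qed.

Lemma partial_weight_end C : partial_weight C (2 * n) = weight phi D C.
Proof. by rewrite weightE (big_under_prod D) /partial_weight big_mkord. Qed.

End Weights.

Section Extension.

Variables (X : finType) (opX : X -> X -> X) (L : finGroupType) (phi : X -> X -> L).
Hypothesis mulgC : forall a b : L, (a * b = b * a)%g.
Variables (n : nat) (D : gauss_diagram n).
Hypothesis gd_pass_inj : injective (gd_pass D).

Local Notation Q := (L * X)%type.
Local Notation opQ := (ext_op opX phi).
Local Notation mulL := (comm_mulg mulgC).
Local Notation partial_weight := (partial_weight phi mulgC D).

Definition ext_proj (C : segcol n Q) : segcol n X := [ffun i => (C i).2].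

Definition ext_lift (C : segcol n X) : segcol n Q :=
  [ffun i : 'I_(2 * n).+1 => (partial_weight C i, C i)].

Lemma coloring_ext_proj C : is_coloring opQ D C -> is_coloring opX D (ext_proj C).
Proof.
move=> /forallP colC; apply/forallP => c /=; rewrite !ffunE.
have /andP[/eqP -> colC_u] := colC c; rewrite eqxx /=.
by case: (gd_sign D c) colC_u => /eqP ->.
Qed.

Lemma ext_coloring_fstS C p : is_coloring opQ D C -> p < 2 * n ->
  (C (inord p.+1)).1 =
  ((C (inord p)).1 * under_prod D mulL (crossing_weight phi D (ext_proj C)) p)%g.
Proof.
move=> /forallP colC lt_p.
have [[c|c] /(congr1 val) /= <-] := gd_pass_surj gd_pass_inj (Ordinal lt_p).
- rewrite under_prod_under // /crossing_weight !ffunE.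
  have /andP[_] := colC c.
  by case: (gd_sign D c) => /eqP ->; rewrite /comm_mulg /ext_op /= ?mulgK.
- rewrite under_prod_over // mulg1.
  by have /andP[/eqP -> _] := colC c.
Qed.

Lemma ext_coloring_fst C i : is_coloring opQ D C -> (top_col C).1 = 1%g ->
  i <= 2 * n -> (C (inord i)).1 = partial_weight (ext_proj C) i.
Proof.
move=> colC top1; elim: i => [_|i IHi lt_i].
  by rewrite partial_weight0 inord0.
by rewrite partial_weightS -IHi ?ext_coloring_fstS // ltnW.
Qed.

Lemma ext_coloring_bot_fst C : is_coloring opQ D C -> (top_col C).1 = 1%g ->
  (bot_col C).1 = weight phi D (ext_proj C).
Proof. by move=> colC top1; rewrite -partial_weight_end -ext_coloring_fst // inord_max. Qed.

Lemma top_col_ext_proj C : top_col (ext_proj C) = (top_col C).2.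
Proof. by rewrite /top_col ffunE. Qed.

Lemma bot_col_ext_proj C : bot_col (ext_proj C) = (bot_col C).2.
Proof. by rewrite /bot_col ffunE. Qed.

Lemma ext_proj_inj C1 C2 :
  is_coloring opQ D C1 -> is_coloring opQ D C2 ->
  (top_col C1).1 = 1%g -> (top_col C2).1 = 1%g ->
  ext_proj C1 = ext_proj C2 -> C1 = C2.
Proof.
move=> colC1 colC2 top1 top2 eq_proj; apply/ffunP => i.
have le_i : (i : nat) <= 2 * n by rewrite -ltnS.
have fst1 := ext_coloring_fst colC1 top1 le_i.
have fst2 := ext_coloring_fst colC2 top2 le_i.
rewrite inord_val in fst1 fst2; rewrite eq_proj -fst2 in fst1.
have /ffunP/(_ i) := eq_proj; rewrite !ffunE.
by case: (C1 i) fst1 => ? ?; case: (C2 i) => ? ? /= -> ->.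
Qed.

Lemma ext_lift_inord C i :
  i <= 2 * n -> ext_lift C (inord i) = (partial_weight C i, C (inord i)).
Proof. by move=> le_i; rewrite ffunE inordK. Qed.

Lemma coloring_ext_lift C : is_coloring opX D C -> is_coloring opQ D (ext_lift C).
Proof.
move=> /forallP colC; apply/forallP => c /=.
have lt_u := ltn_ord (gd_under D c); have lt_o := ltn_ord (gd_over D c).
have le_u := ltnW lt_u; have le_o := ltnW lt_o.
rewrite !ext_lift_inord // !partial_weightS.
rewrite under_prod_over // under_prod_under // /comm_mulg mulg1.
have /andP[/eqP eq_o colC_u] := colC c; rewrite eq_o eqxx /crossing_weight /ext_op /=.
by case: (gd_sign D c) colC_u => /eqP colC_u; rewrite -eq_o colC_u ?mulgVK.
Qed.

Lemma ext_proj_lift C : ext_proj (ext_lift C) = C.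
Proof. by apply/ffunP => i; rewrite !ffunE. Qed.

Lemma top_col_ext_lift C : top_col (ext_lift C) = (1%g, top_col C).
Proof. by rewrite /top_col ffunE partial_weight0. Qed.

Lemma bot_col_ext_lift C : bot_col (ext_lift C) = (weight phi D C, bot_col C).
Proof. by rewrite /bot_col ffunE partial_weight_end. Qed.

Definition weighted_knot_colorings (l : L) (y : X) : {set segcol n X} :=
  [set C in knot_colorings opX D | (top_col C == y) && (weight phi D C == l)].

Lemma card_ext_colorings_bot l x :
  #|[set C in tangle_colorings opQ D |
       (top_col C == (1%g, x)) && (bot_col C == (l, x))]| =
  #|weighted_knot_colorings l x|.
Proof.
set S := [set C in _ | _].
have proj_injS : {in S &, injective ext_proj}.
  move=> C1 C2; rewrite !inE => /and3P[col1 /eqP top1 _] /and3P[col2 /eqP top2 _].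
  by apply: ext_proj_inj; rewrite ?top1 ?top2.
rewrite -(card_in_imset proj_injS); congr #|pred_of_set _|; apply/setP => C.
apply/imsetP/idP => [[CQ] | ].
  rewrite !inE => /and3P[colCQ /eqP topCQ /eqP botCQ] ->.
  rewrite coloring_ext_proj //= top_col_ext_proj bot_col_ext_proj.
  by rewrite -ext_coloring_bot_fst ?topCQ // botCQ !eqxx.
rewrite !inE => /and3P[/andP[colC /eqP top_bot] /eqP topC /eqP wC].
exists (ext_lift C); last by rewrite ext_proj_lift.
rewrite !inE coloring_ext_lift // top_col_ext_lift bot_col_ext_lift.
by rewrite -top_bot topC wC !eqxx.
Qed.

End Extension.

Section RightTranslation.

Variables (X : finType) (opX : X -> X -> X) (L : finGroupType) (phi : X -> X -> L).
Hypothesis mulgC : forall a b : L, (a * b = b * a)%g.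
Hypothesis opX_distr : forall a b c, opX (opX a b) c = opX (opX a c) (opX b c).
Hypothesis phi_cocycle : forall a b c,
  (phi a b * phi (opX a b) c = phi a c * phi (opX a c) (opX b c))%g.
Variables (n : nat) (D : gauss_diagram n).
Hypothesis gd_pass_inj : injective (gd_pass D).

Local Notation mulL := (comm_mulg mulgC).
Local Notation weighted_knot_colorings := (weighted_knot_colorings opX phi D).

Definition col_map (h : X -> X) (C : segcol n X) : segcol n X := [ffun i => h (C i)].

Lemma coloring_col_map h C : {morph h : u v / opX u v} ->
  is_coloring opX D C -> is_coloring opX D (col_map h C).
Proof.
move=> h_morph /forallP colC; apply/forallP => c /=; rewrite !ffunE.
have /andP[/eqP -> colC_u] := colC c; rewrite eqxx /=.
by case: (gd_sign D c) colC_u => /eqP ->; rewrite h_morph.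
Qed.

Lemma col_map_inj h : injective h -> injective (col_map h).
Proof.
by move=> h_inj C1 C2 /ffunP eqC; apply/ffunP => i; apply: h_inj; have := eqC i; rewrite !ffunE.
Qed.

Lemma cocycle_shift s t a :
  phi (opX s a) (opX t a) = ((phi s a)^-1 * phi s t * phi (opX s t) a)%g.
Proof. by rewrite -mulgA phi_cocycle mulKg. Qed.

Definition passage_factor (C : segcol n X) a p : L :=
  (phi (C (inord p.+1)) a * (phi (C (inord p)) a)^-1)%g.

Lemma crossing_weight_col_mapR C a c : is_coloring opX D C ->
  crossing_weight phi D (col_map (opX^~ a) C) c =
  (crossing_weight phi D C c * passage_factor C a (gd_under D c))%g.
Proof.
move=> /forallP colC; rewrite /crossing_weight /passage_factor !ffunE.
have /andP[_] := colC c.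
case: (gd_sign D c) => /eqP colC_u; rewrite cocycle_shift -colC_u.
  by rewrite (mulgC (phi _ a)^-1) -mulgA (mulgC (phi _ a)^-1).
by rewrite !invMg invgK [LHS]mulgC -mulgA.
Qed.

Lemma prod_passage_factor C a i :
  \big[mulL/1%g]_(0 <= p < i) passage_factor C a p =
  (phi (C (inord i)) a * (phi (C (inord 0)) a)^-1)%g.
Proof.
elim: i => [|i IHi]; first by rewrite big_geq // mulgV.
by rewrite big_nat_recr //= IHi /passage_factor /comm_mulg [LHS]mulgC -mulgA mulKg.
Qed.

Lemma weight_col_mapR C a : is_coloring opX D C -> top_col C = bot_col C ->
  weight phi D (col_map (opX^~ a) C) = weight phi D C.
Proof.
move=> colC top_bot.
have under_passage (p : 'I_(2 * n)) :
    under_prod D mulL (fun c => passage_factor C a (gd_under D c)) p =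
    passage_factor C a p.
  have [[c|c] <-] := gd_pass_surj gd_pass_inj p; first by rewrite under_prod_under.
  rewrite under_prod_over // /passage_factor.
  by have /forallP/(_ c)/andP[/eqP -> _] := colC; rewrite mulgV.
have passage_prod : \big[mulL/1%g]_(c < n) passage_factor C a (gd_under D c) = 1%g.
  rewrite (big_under_prod D) (eq_bigr _ (fun p _ => under_passage p)).
  rewrite -(big_mkord xpredT) prod_passage_factor.
  rewrite inord_max inord0.
  by move: top_bot; rewrite /top_col /bot_col => ->; rewrite mulgV.
rewrite !weightE; under eq_bigr do rewrite crossing_weight_col_mapR //.
by rewrite big_split /= passage_prod /comm_mulg mulg1.
Qed.

Lemma card_weighted_knot_colorings_le h l y :
  {morph h : u v / opX u v} -> injective h ->
  (forall C, is_coloring opX D C -> top_col C = bot_col C ->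
     weight phi D (col_map h C) = weight phi D C) ->
  #|weighted_knot_colorings l y| <= #|weighted_knot_colorings l (h y)|.
Proof.
move=> h_morph h_inj h_weight.
rewrite -(card_imset _ (col_map_inj h_inj)); apply: subset_leq_card.
apply/subsetP => _ /imsetP[C + ->].
rewrite !inE => /and3P[/andP[colC /eqP top_bot] /eqP topC /eqP wC].
rewrite coloring_col_map // h_weight // wC /top_col /bot_col !ffunE.
by move: top_bot topC; rewrite /top_col /bot_col => -> ->; rewrite !eqxx.
Qed.

Lemma card_weighted_knot_coloringsR l y a : bijective (opX^~ a) ->
  #|weighted_knot_colorings l y| = #|weighted_knot_colorings l (opX y a)|.
Proof.
move=> [g opXK opXVK].
have g_morph : {morph g : u v / opX u v}.
  by move=> u v; apply: (can_inj opXK); rewrite /= opXVK opX_distr !opXVK.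
have g_weight C : is_coloring opX D C -> top_col C = bot_col C ->
    weight phi D (col_map g C) = weight phi D C.
  move=> colC top_bot.
  have {2}<- : col_map (opX^~ a) (col_map g C) = C by apply/ffunP => i; rewrite !ffunE opXVK.
  rewrite weight_col_mapR ?coloring_col_map //.
  by move: top_bot; rewrite /top_col /bot_col !ffunE => ->.
have le_R := card_weighted_knot_colorings_le l y (fun u v => opX_distr u v a) (can_inj opXK)
  (fun C colC => weight_col_mapR a colC).
have le_g := card_weighted_knot_colorings_le l (opX y a) g_morph (can_inj opXVK) g_weight.
by apply/eqP; rewrite eqn_leq le_R -{2}[y]opXK le_g.
Qed.

Lemma card_knot_colorings_weight l :
  #|[set C in knot_colorings opX D | weight phi D C == l]| =
  \sum_y #|weighted_knot_colorings l y|.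
Proof.
rewrite -sum1_card (partition_big (@top_col n X) predT) //=.
apply: eq_bigr => y _; rewrite -sum1_card; apply: eq_bigl => C.
by rewrite !inE (andbC (top_col C == y)) andbA.
Qed.

End RightTranslation.

Lemma connected_quandle_invariant (Y : finType) (op : Y -> Y -> Y)
    (T : eqType) (f : Y -> T) :
  connected_quandle op -> (forall y a, f (op y a) = f y) -> forall y z, f y = f z.
Proof.
move=> op_conn f_inv y z.
have f_closed : closed [rel u v | [exists a, (v == op u a) || (u == op v a)]]
                       [pred u | f u == f y].
  by move=> u v /existsP[a /orP[] /eqP ->]; rewrite !inE f_inv.
by have := closed_connect f_closed (op_conn y z); rewrite !inE eqxx => /esym/eqP.
Qed.

Unset Implicit Arguments.
Set Strict Implicit.

Theorem mainTheorem4 (X : finType) (opX : X -> X -> X)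
    (L : finGroupType) (phi : X -> X -> L)
    (n : nat) (D : gauss_diagram n) (x : X) :
  is_quandle opX ->
  (forall a b : L, (a * b = b * a)%g) ->
  quandle_cocycle opX phi ->
  connected_quandle (ext_op opX phi) ->
  valid_diagram D ->
  let opQ := ext_op opX phi in
  let e : (L * X)%type := (1%g, x) in
  let C0 := [set C in tangle_colorings opQ D |
               (top_col C == e) && ((bot_col C).2 == x)] in
  let C1 := col_e opQ D e :\: C0 in
  let nl := cocycle_invariant opX phi D in
  forall q : (L * X)%type,
    (((Psi opQ D e q)%:~R : rat)
     = (#|X|%:R)^-1 * (\sum_(l : L | (l, x) == q) (nl l)%:~R)
       + (fsum C1 (@bot_col n (L * X)%type) q)%:~R)%R.
Proof.
move=> [_ opX_bij opX_distr] mulgC [_ phi_cocycle] opQ_conn [gd_pass_inj _].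
move=> opQ e C0 C1 nl [l y].
have C0_sub : C0 \subset col_e opQ D e.
  by apply/subsetP => C; rewrite !inE => /and3P[-> -> _].
rewrite /Psi (fsumID _ C0) (setIidPr C0_sub) intrD; congr (_ + _)%R.
have [<- | neq_xy] := eqVneq x y; last first.
  rewrite big_pred0 => [|l']; last by rewrite xpair_eqE (negbTE neq_xy) andbF.
  rewrite mulr0 ffunE; apply/eqP; rewrite intr_eq0 eqz_nat cards_eq0; apply/eqP/setP => C.
  rewrite !inE; apply/negbTE/negP => /andP[/and3P[_ _ /eqP bot_x] /eqP bot_q].
  by rewrite -bot_x bot_q eqxx in neq_xy.
have weighted_const y' : #|weighted_knot_colorings opX phi D l y'| =
                         #|weighted_knot_colorings opX phi D l x|.
  pose card_at (u : L * X) := #|weighted_knot_colorings opX phi D l u.2|.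
  apply: (connected_quandle_invariant (f := card_at) opQ_conn _ (1%g, y') (1%g, x)) => u a.
  exact/esym/(card_weighted_knot_coloringsR mulgC opX_distr phi_cocycle gd_pass_inj l u.2
                                            (opX_bij a.2)).
rewrite (big_pred1 l) => [|l']; last by rewrite xpair_eqE eqxx andbT.
rewrite /nl /cocycle_invariant /fsum !ffunE card_knot_colorings_weight.
rewrite (eq_bigr _ (fun y' _ => weighted_const y')) sum_nat_const -!pmulrn natrM mulKf.
  rewrite -(card_ext_colorings_bot opX phi mulgC gd_pass_inj); congr (_%:R)%R.
  apply: eq_card => C.
  by rewrite !inE; case: (bot_col C =P (l, x)) => [-> | _]; rewrite ?andbF ?eqxx ?andbT.
by rewrite pnatr_eq0 -lt0n; apply/card_gt0P; exists x.
Qed.
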